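(* With notation as in the context (type $E_6$ over $\mathbb{Z}/3$), let $\alpha$ be a positive root of $E_6$, let $s\in\{1,3,4,5,6\}$ and let $\beta\in\Delta_s^+$. Then $f(\beta)+f(\alpha)\in\Gamma_s^+$ if and only if $\beta+\alpha\in\Delta_s^+$.
   Context: Let $V=(\mathbb{Z}/3)^5$ with the standard symmetric form $\sum_i x_iy_i$. Let $\Delta$ be the root system of type $E_6$ with simple roots $\alpha_1,\dots,\alpha_6$, $\langle\alpha_i,\alpha_i\rangle=2$, $\langle\alpha_i,\alpha_j\rangle=-1$ if $\{i,j\}\in\{\{1,3\},\{3,4\},\{4,5\},\{5,6\},\{2,4\}\}$, $0$ otherwise; $\Lambda=\bigoplus\mathbb{Z}\alpha_i$, $\Delta^+$ the positive roots. Let $f:\Lambda\to V$ be the group homomorphism with $f(\alpha_1)=(1,2,0,0,0)$, $f(\alpha_2)=(0,0,0,1,2)$, $f(\alpha_3)=(0,1,2,0,0)$, $f(\alpha_4)=(0,0,1,2,0)$, $f(\alpha_5)=(0,0,0,1,1)$, $f(\alpha_6)=(1,1,1,1,1)$. For $\beta=\sum\beta^i\alpha_i\in\Delta^+$ let $m(\beta)=\max\{i:\beta^i\ne0\}$; set $\Delta_1^+=\{\alpha_1\}$, $\Delta_3^+=\{\beta: m(\beta)\in\{2,3\}\}$, $\Delta_s^+=\{\beta: m(\beta)=s\}$ for $s=4,5,6$, and $\Gamma_s^+=f(\Delta_s^+)$. *)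

From mathcomp Require Import all_boot all_order all_algebra.
Set Implicit Arguments. Unset Strict Implicit. Unset Printing Implicit Defensive.
Import Order.TTheory GRing.Theory Num.Theory.
Local Open Scope ring_scope.

(* Root lattice Lambda = (+)_{i=1..6} Z alpha_i, coordinates w.r.t. the simple
   roots; index i : 'I_6 (0-based) corresponds to alpha_{i+1}. *)
Definition Lam := {ffun 'I_6 -> int}.

Definition E6edge (i j : nat) : bool :=
  [|| (i == 1) && (j == 3), (i == 3) && (j == 4), (i == 4) && (j == 5),
      (i == 5) && (j == 6) | (i == 2) && (j == 4)]%N.

Definition cartan (i j : 'I_6) : int :=
  if i == j then 2
  else if E6edge i.+1 j.+1 || E6edge j.+1 i.+1 then -1 else 0.

Definition form (x y : Lam) : int :=
  \sum_(i < 6) \sum_(j < 6) x i * y j * cartan i j.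

Definition simple (i : 'I_6) : Lam := [ffun j => ((i == j) : nat)%:Z].

Definition refl (i : 'I_6) (x : Lam) : Lam := x - simple i *~ form x (simple i).

Inductive root : Lam -> Prop :=
| root_simple i : root (simple i)
| root_refl i x : root x -> root (refl i x).

Definition pos_root (x : Lam) : Prop := root x /\ forall i, 0 <= x i.

Definition mx (b : Lam) : nat := \max_(i < 6 | b i != 0) i.+1.

Definition Delta (s : nat) (b : Lam) : Prop :=
  pos_root b /\
  (if s == 1%N then b == simple ord0
   else if s == 3%N then (mx b == 2%N) || (mx b == 3%N)
   else mx b == s).

Definition V := 'rV['Z_3]_5.

Definition ftable : seq (seq nat) :=
  [:: [:: 1; 2; 0; 0; 0]%N;
      [:: 0; 0; 0; 1; 2]%N;
      [:: 0; 1; 2; 0; 0]%N;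
      [:: 0; 0; 1; 2; 0]%N;
      [:: 0; 0; 0; 1; 1]%N;
      [:: 1; 1; 1; 1; 1]%N].

Definition fsimple (i : 'I_6) : V :=
  \row_(j < 5) ((nth 0%N (nth [::] ftable i) j)%:R : 'Z_3).

Definition f (b : Lam) : V := \sum_(i < 6) fsimple i *~ b i.

Definition Gamma (s : nat) (v : V) : Prop := exists g, Delta s g /\ f g = v.

From Pilot Require Import Defs.
From mathcomp Require Import all_boot all_order all_algebra.
Import GRing.Theory.
Local Open Scope ring_scope.

(* Saturating the simple roots under the simple reflections, computed on
   coordinate lists, yields 72 vectors closed under every reflection; these are
   therefore exactly the roots of E6, and 36 of them are positive.  On a
   positive root n, membership in Delta_s and the value of f modulo 3 are
   computable from the coordinates of n.  Since f is additive, beta + alpha is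
   its own witness for the "if" direction, and the "only if" direction is a
   finite check over the pairs of positive roots. *)

Definition lamz (c : seq int) : Lam := [ffun i : 'I_6 => c`_i].

Lemma lamzE (c : seq int) (i : 'I_6) : lamz c i = c`_i.
Proof. by rewrite ffunE. Qed.

Lemma form_simple (x : Lam) (i : 'I_6) :
  Defs.form x (simple i) = \sum_(k < 6) x k * cartan k i.
Proof.
apply: eq_bigr => k _; rewrite (bigD1 i) //= big1 => [|j ji].
  by rewrite ffunE eqxx mulr1 addr0.
by rewrite ffunE eq_sym (negbTE ji) mulr0 mul0r.
Qed.

(* The [_seq] definitions below are computable mirrors on coordinate lists:
   bigops are locked and [insub] into ordinals goes through the opaque [idP],
   so neither reduces under vm_compute. *)
Definition cartan_nat (i j : nat) : int :=
  if i == j then 2 else if E6edge i.+1 j.+1 || E6edge j.+1 i.+1 then -1 else 0.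

Lemma cartanE (i j : 'I_6) : cartan i j = cartan_nat i j.
Proof. by []. Qed.

Definition form_seq (c : seq int) (i : nat) : int :=
  foldr +%R 0 [seq c`_k * cartan_nat k i | k <- iota 0 6].

Lemma form_lamz (c : seq int) (i : 'I_6) :
  Defs.form (lamz c) (simple i) = form_seq c i.
Proof.
rewrite form_simple /form_seq foldrE big_map -[iota 0 6]/(index_iota 0 6) big_mkord.
by apply: eq_bigr => k _; rewrite lamzE cartanE.
Qed.

Definition refl_seq (i : nat) (c : seq int) : seq int :=
  [seq c`_k - (k == i)%:R * form_seq c i | k <- iota 0 6].

Lemma refl_lamz (i : 'I_6) (c : seq int) : refl i (lamz c) = lamz (refl_seq i c).
Proof.
apply/ffunP => k; rewrite /refl form_lamz !ffunE ffunMzE !ffunE.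
by rewrite (nth_map 0%N) ?size_iota // nth_iota // add0n eq_sym mulrzz natz.
Qed.

Definition simple_seq (i : nat) : seq int := [seq (k == i :> nat)%:R | k <- iota 0 6].

Lemma simple_lamz (i : 'I_6) : simple i = lamz (simple_seq i).
Proof.
by apply/ffunP => k; rewrite !ffunE (nth_map 0%N) ?size_iota // nth_iota // natz eq_sym.
Qed.

Definition refl_closure_step (L : seq (seq int)) : seq (seq int) :=
  undup (L ++ [seq refl_seq i c | c <- L, i <- iota 0 6]).

Definition E6_roots : seq (seq int) :=
  Eval vm_compute in iter 12 refl_closure_step [seq simple_seq i | i <- iota 0 6].

Lemma E6_rootsE :
  E6_roots = iter 12 refl_closure_step [seq simple_seq i | i <- iota 0 6].
Proof. by vm_compute. Qed.

(* Keeps unification from unfolding the literal; vm_compute ignores this. *)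
Opaque E6_roots.

Lemma E6_roots_refl_closed :
  all (fun c => all (fun i => refl_seq i c \in E6_roots) (iota 0 6)) E6_roots.
Proof. by vm_compute. Qed.

Lemma E6_roots_simple : all (fun i => simple_seq i \in E6_roots) (iota 0 6).
Proof. by vm_compute. Qed.

Lemma size_E6_roots : all (fun c => size c == 6%N) E6_roots.
Proof. by vm_compute. Qed.

Lemma refl_closure_step_root (L : seq (seq int)) :
  {in L, forall c, Defs.root (lamz c)} ->
  {in refl_closure_step L, forall c, Defs.root (lamz c)}.
Proof.
move=> rootL c; rewrite mem_undup mem_cat => /orP[/rootL //|/allpairsP[[d i] [dL]]].
rewrite mem_iota add0n => lt_i6 ->.
by rewrite -[i]/(val (Ordinal lt_i6)) -refl_lamz; apply/root_refl/rootL.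
Qed.

Lemma root_E6_roots (x : Lam) :
  Defs.root x <-> exists2 c, c \in E6_roots & x = lamz c.
Proof.
split=> [|[c + ->]].
  elim=> [i | i y _ [c cR ->]].
    exists (simple_seq i); last exact: simple_lamz.
    by apply: (allP E6_roots_simple); rewrite mem_iota add0n ltn_ord.
  exists (refl_seq i c); last exact: refl_lamz.
  by have /allP := allP E6_roots_refl_closed c cR; apply; rewrite mem_iota add0n ltn_ord.
rewrite E6_rootsE; elim: 12%N c => [|n IHn] c; last exact: refl_closure_step_root.
case/mapP=> i; rewrite mem_iota add0n => lt_i6 ->.
by rewrite -[i]/(val (Ordinal lt_i6)) -simple_lamz; apply: root_simple.
Qed.

Definition lamn (n : seq nat) : Lam := [ffun i : 'I_6 => (nth 0%N n i)%:Z].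

Lemma lamnE (n : seq nat) (i : 'I_6) : lamn n i = (nth 0%N n i)%:Z.
Proof. by rewrite ffunE. Qed.

Definition E6_pos_roots : seq (seq nat) :=
  [seq map absz c | c <- E6_roots & all (fun z => 0 <= z) c].

Lemma lamn_absz (c : seq int) :
  size c = 6%N -> all (fun z => 0 <= z) c -> lamn (map absz c) = lamz c.
Proof.
move=> size_c c_nneg; apply/ffunP => k; rewrite lamzE lamnE (nth_map 0) ?size_c //.
by rewrite gez0_abs //; apply: (all_nthP 0 c_nneg); rewrite size_c.
Qed.

Lemma pos_rootP (x : Lam) :
  pos_root x <-> exists2 n, n \in E6_pos_roots & x = lamn n.
Proof.
split=> [[/root_E6_roots[c cR ->] c_ge0] | [_ /mapP[c + ->] ->]].
  have /eqP size_c := allP size_E6_roots c cR.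
  have c_nneg : all (fun z => 0 <= z) c.
    apply/(all_nthP 0) => k; rewrite size_c => lt_k6.
    by have := c_ge0 (Ordinal lt_k6); rewrite lamzE.
  exists (map absz c); last by rewrite lamn_absz.
  by apply/mapP; exists c; rewrite ?mem_filter ?cR ?c_nneg.
rewrite mem_filter => /andP[c_nneg cR]; split=> [|k]; last by rewrite lamnE.
have /eqP size_c := allP size_E6_roots c cR.
by rewrite lamn_absz //; apply/root_E6_roots; exists c.
Qed.

Definition mx_seq (n : seq nat) : nat :=
  foldr maxn 0%N [seq k.+1 | k <- iota 0 6 & nth 0%N n k != 0%N].

Lemma mx_lamn (n : seq nat) : mx (lamn n) = mx_seq n.
Proof.
rewrite /mx_seq foldrE big_map big_filter -[iota 0 6]/(index_iota 0 6) big_mkord.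
by apply: eq_bigl => k; rewrite lamnE.
Qed.

Definition Delta_seq (s : nat) (n : seq nat) : bool :=
  if s == 1%N then n == [:: 1; 0; 0; 0; 0; 0]%N
  else if s == 3%N then (mx_seq n == 2%N) || (mx_seq n == 3%N)
  else mx_seq n == s.

Lemma lamn_inj (n m : seq nat) :
  size n = 6%N -> size m = 6%N -> lamn n = lamn m -> n = m.
Proof.
move=> size_n size_m /ffunP eq_nm.
apply: (@eq_from_nth _ 0%N); rewrite ?size_n ?size_m // => k lt_k6.
by have := eq_nm (Ordinal lt_k6); rewrite !lamnE => -[].
Qed.

Lemma size_E6_pos_roots (n : seq nat) : n \in E6_pos_roots -> size n = 6%N.
Proof.
case/mapP=> c; rewrite mem_filter => /andP[_ cR] ->.
by rewrite size_map; apply/eqP/(allP size_E6_roots).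
Qed.

Lemma Delta_lamnP {s : nat} {n : seq nat} :
  n \in E6_pos_roots -> Delta s (lamn n) <-> Delta_seq s n.
Proof.
move=> nP; rewrite /Delta /Delta_seq mx_lamn.
have -> : (lamn n == simple ord0) = (n == [:: 1; 0; 0; 0; 0; 0]%N).
  have -> : simple ord0 = lamn [:: 1; 0; 0; 0; 0; 0]%N.
    by apply/ffunP => -[[|[|[|[|[|[|k]]]]]] lt_k6]; rewrite !ffunE.
  by apply/eqP/eqP => [|-> //]; apply: lamn_inj => //; exact: size_E6_pos_roots.
by split=> [[] | ] //; split=> //; apply/pos_rootP; exists n.
Qed.

Lemma fD (x y : Lam) : f (x + y) = f x + f y.
Proof. by rewrite /f -big_split; apply: eq_bigr => i _; rewrite ffunE mulrzDr. Qed.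

Definition fcoord (n : seq nat) (j : nat) : nat :=
  sumn [seq nth 0%N n k * nth 0%N (nth [::] ftable k) j | k <- iota 0 6].

Lemma f_lamn (n : seq nat) : f (lamn n) = \row_j (fcoord n j)%:R.
Proof.
apply/rowP => j; rewrite summxE mxE /fcoord sumnE big_map natr_sum.
rewrite -[iota 0 6]/(index_iota 0 6) big_mkord; apply: eq_bigr => k _.
by rewrite lamnE mulmxnE mxE natrM mulr_natl.
Qed.

Definition fmod3 (n : seq nat) : seq nat := [seq (fcoord n j %% 3)%N | j <- iota 0 5].

Lemma f_lamn_fmod3 (n m : seq nat) : f (lamn n) = f (lamn m) -> fmod3 n = fmod3 m.
Proof.
rewrite !f_lamn => /rowP eq_nm; apply/eq_in_map => j; rewrite mem_iota => /andP[_ lt_j5].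
by have := eq_nm (Ordinal lt_j5); rewrite !mxE => /(congr1 (@nat_of_ord _)); rewrite !val_Zp_nat.
Qed.

Definition addn_seq (n m : seq nat) : seq nat :=
  [seq nth 0%N n k + nth 0%N m k | k <- iota 0 6].

Lemma lamnD (n m : seq nat) : lamn n + lamn m = lamn (addn_seq n m).
Proof. by apply/ffunP => k; rewrite !ffunE (nth_map 0%N) ?size_iota // nth_iota. Qed.

Definition Gamma_seq (s : nat) (v : seq nat) : bool :=
  has (fun g => Delta_seq s g && (fmod3 g == v)) E6_pos_roots.

Lemma Gamma_f_lamn (s : nat) (n : seq nat) :
  Gamma s (f (lamn n)) -> Gamma_seq s (fmod3 n).
Proof.
case=> x [Dx]; have [g gP xg] := (pos_rootP x).1 Dx.1.
rewrite xg => /f_lamn_fmod3 eq_gn; apply/hasP; exists g; rewrite // eq_gn eqxx andbT.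
by move: Dx; rewrite xg => /(Delta_lamnP gP).
Qed.

Lemma Delta_seq_addn_seq {s : nat} {a b : seq nat} :
  s \in [:: 1; 3; 4; 5; 6]%N -> a \in E6_pos_roots -> b \in E6_pos_roots ->
  Delta_seq s b -> Gamma_seq s (fmod3 (addn_seq b a)) ->
  (addn_seq b a \in E6_pos_roots) && Delta_seq s (addn_seq b a).
Proof.
(* Gamma_seq, a search over all positive roots, is only evaluated when the
   conclusion fails. *)
have /allP check : all (fun s => all (fun a => all (fun b =>
    Delta_seq s b ==> (addn_seq b a \in E6_pos_roots) && Delta_seq s (addn_seq b a)
                      || ~~ Gamma_seq s (fmod3 (addn_seq b a)))
    E6_pos_roots) E6_pos_roots) [:: 1; 3; 4; 5; 6]%N by vm_compute.
move=> /check /allP check_s /check_s /allP check_sa /check_sa /implyP check_sab /check_sab.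
by case/orP=> [// | /negP].
Qed.

Theorem mainTheorem17 (s : nat) (alpha beta : Lam) :
  s \in [:: 1; 3; 4; 5; 6]%N ->
  pos_root alpha ->
  Delta s beta ->
  (Gamma s (f beta + f alpha) <-> Delta s (beta + alpha)).
Proof.
move=> s_ok /pos_rootP[a aP ->] Dbeta; have [b bP beta_b] := (pos_rootP beta).1 Dbeta.1.
move: Dbeta; rewrite beta_b => /(Delta_lamnP bP) Db.
rewrite -fD lamnD; split=> [/Gamma_f_lamn gamma_ba | ]; last by exists (lamn (addn_seq b a)).
have /andP[baP Dba] := Delta_seq_addn_seq s_ok aP bP Db gamma_ba.
exact/(Delta_lamnP baP).
Qed.
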